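(* Let $k_+,k_-,t$ be integers with $0\leq k_-\leq k_+$, $k_++k_-\geq 1$ and $t>0$. Then for any real number $\epsilon>0$ there is an integer $\lambda$ and infinitely many values of $n$ such that $\mathbb{Z}^n$ can be $\lambda$-lattice-packed by $\mathcal{B}(n,t,k_+,k_-)$ with density $\delta=\Omega(n^{-\epsilon})$.
   Context: $\mathcal{B}(n,t,k_+,k_-)=\{\mathbf{x}\in\mathbb{Z}^n : -k_-\le x_i\le k_+ \text{ for all } i,\ \mathrm{wt}(\mathbf{x})\le t\}$, where $\mathrm{wt}$ is the Hamming weight. A set $\mathcal{B}\subseteq\mathbb{Z}^n$ $\lambda$-packs $\mathbb{Z}^n$ by a lattice $\Lambda\subseteq\mathbb{Z}^n$ if every $\mathbf{z}\in\mathbb{Z}^n$ lies in $\mathbf{v}+\mathcal{B}$ for at most $\lambda$ distinct $\mathbf{v}\in\Lambda$; the density is $|\mathcal{B}|/\mathrm{vol}(\Lambda)$ with $\mathrm{vol}(\Lambda)=|\mathbb{Z}^n/\Lambda|$. The asymptotic notation refers to $n\to\infty$ along these values, with $\epsilon,t,k_\pm$ fixed. *)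

From HB Require Import structures.
From Stdlib Require Import Rdefinitions Raxioms RIneq Rpower.
From mathcomp Require Import all_boot all_order all_algebra.
Set Implicit Arguments. Unset Strict Implicit. Unset Printing Implicit Defensive.
Import Order.TTheory GRing.Theory Num.Theory.
Local Open Scope ring_scope.

Definition wt (n : nat) (x : 'rV[int]_n) : nat := #|[set i : 'I_n | x ord0 i != 0]|.

Definition inB (n t kp km : nat) (x : 'rV[int]_n) : bool :=
  [forall i : 'I_n, (- (km%:Z) <= x ord0 i) && (x ord0 i <= kp%:Z)] && (wt x <= t)%N.

(* |B(n,t,k+,k-)|: count the points of the box {-k-,...,k+}^n (encoded
   injectively by f |-> (f i - k-)_i) that lie in B. *)
Definition card_B (n t kp km : nat) : nat :=
  #|[set f : {ffun 'I_n -> 'I_(kp + km + 1)} |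
       inB t kp km (\row_i ((nat_of_ord (f i))%:Z - km%:Z))]|.

Definition is_lattice (n : nat) (L : 'rV[int]_n -> Prop) : Prop :=
  L 0 /\ (forall x y, L x -> L y -> L (x - y)).

(* vol(Lambda) = |Z^n / Lambda| = v : there is a complete system of v
   pairwise incongruent coset representatives. *)
Definition has_index (n : nat) (L : 'rV[int]_n -> Prop) (v : nat) : Prop :=
  exists r : 'I_v -> 'rV[int]_n,
    (forall z, exists i, L (z - r i)) /\
    (forall i j, L (r i - r j) -> i = j).

Definition lambda_packs (n : nat) (B : 'rV[int]_n -> bool)
    (L : 'rV[int]_n -> Prop) (lam : nat) : Prop :=
  forall (z : 'rV[int]_n) (s : seq 'rV[int]_n), uniq s ->
    (forall v, v \in s -> L v /\ B (z - v)) -> (size s <= lam)%N.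

(** Fix [r] with [t <= r eps], put [q = k+ + k- + 1] and let [b] be the size of
    the ball [B].  For a modulus [M] prime to [1, ..., q - 1] and [a] in
    [(Z/M)^n], the lattice of the [x] with [sum_i a_i x_i = 0 mod M] has index
    at most [M].  Call words [f_r, ..., f_0] of [B] a fresh chain if each [f_j],
    [j > 0], has a nonzero coordinate outside the supports of [f_0, ..., f_(j-1)].
    If [a] makes all the [f_j] congruent, the value of [a] at that coordinate is
    forced by the other values, since nonzero letters are units mod [M]; hence at
    most [M^(n-r)] vectors [a] collapse a given fresh chain, and when
    [b^(r+1) < M^r] some [a] collapses none.  For that [a] every congruence class
    of [B] has at most [q^(t r)] elements, as a larger class contains a fresh
    chain built greedily: this is a [q^(t r)]-packing.  Finally [M = K! s + 1],
    [K = k+ + k-], can be taken with [M^r <= (K! + 1)^r b^(r+1)], and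
    [b <= (2 q n)^t] turns the density [b / M] into [c n^(-t/r) >= c n^(-eps)]. *)
From Stdlib Require Import Rdefinitions Raxioms RIneq Rpower.
From Stdlib Require Import Reals Lra.

Section DensityBound.
Local Open Scope R_scope.

Lemma exists_nat_mul_ge (t : nat) (eps : R) :
  0 < eps -> exists r : nat, (0 < r)%nat /\ INR t <= INR r * eps.
Proof.
intros eps_gt0.
destruct (INR_archimed eps (INR t) eps_gt0) as [r hr].
exists r; split; [|lra].
destruct r as [|r]; [simpl in hr; generalize (pos_INR t); lra | apply Nat.lt_0_succ].
Qed.

Lemma Rpower_pow_inv (x : R) (r : nat) :
  0 < x -> (0 < r)%nat -> Rpower (x ^ r) (/ INR r) = x.
Proof.
intros x_gt0 r_gt0.
assert (INR r <> 0) by (apply not_0_INR; intros ->; inversion r_gt0).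
rewrite <- Rpower_pow, Rpower_mult, Rinv_r, Rpower_1 by assumption.
reflexivity.
Qed.

Lemma density_bound (D n b M v r t : nat) (eps : R) :
  (0 < r)%nat -> (0 < D)%nat -> (0 < n)%nat -> (0 < b)%nat -> (0 < v)%nat ->
  (v <= M)%nat -> INR t <= INR r * eps -> (M ^ r <= D * n ^ t * b ^ r)%nat ->
  Rpower (INR D) (- / INR r) * Rpower (INR n) (- eps) <= INR b / INR v.
Proof.
intros r_gt0 D_gt0 n_gt0 b_gt0 v_gt0 vM t_le hM.
assert (r_pos : 0 < INR r) by (apply lt_0_INR; exact r_gt0).
apply lt_0_INR in D_gt0, b_gt0, v_gt0; apply (le_INR 1) in n_gt0; simpl in n_gt0.
apply le_INR in vM, hM; rewrite !mult_INR, !pow_INR in hM.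
assert (M_gt0 : 0 < INR M) by lra.
assert (nt_gt0 : 0 < INR n ^ t) by (apply pow_lt; lra).
assert (Mr_gt0 : 0 < INR M ^ r) by (apply pow_lt; lra).
assert (Dnt_gt0 : 0 < INR D * INR n ^ t) by (apply Rmult_lt_0_compat; lra).
set (nr := Rpower (INR n) (INR r * eps)).
assert (nr_ge : INR n ^ t <= nr).
{ unfold nr; rewrite <- Rpower_pow by lra; apply Rle_Rpower; lra. }
assert (lhsE : Rpower (INR D) (- / INR r) * Rpower (INR n) (- eps)
               = Rpower (/ (INR D * nr)) (/ INR r)).
{ unfold nr, Rpower; rewrite ln_Rinv, ln_mult, ln_exp, <- exp_plus
    by (try apply Rmult_lt_0_compat; try apply exp_pos; lra).
  f_equal; field; lra. }
assert (pow_ge : / (INR D * INR n ^ t) <= (INR b / INR M) ^ r).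
{ unfold Rdiv; rewrite Rpow_mult_distr, pow_inv.
  apply Rmult_le_reg_l with (INR D * INR n ^ t * INR M ^ r);
    [apply Rmult_lt_0_compat; lra|].
  replace (INR D * INR n ^ t * INR M ^ r * / (INR D * INR n ^ t))
    with (INR M ^ r) by (field; split; lra).
  replace (INR D * INR n ^ t * INR M ^ r * (INR b ^ r * / INR M ^ r))
    with (INR D * INR n ^ t * INR b ^ r) by (field; lra).
  exact hM. }
rewrite lhsE; apply Rle_trans with (INR b / INR M).
- rewrite <- (Rpower_pow_inv (INR b / INR M) r)
    by first [exact r_gt0 | apply Rdiv_lt_0_compat; lra].
  apply Rle_Rpower_l; [left; apply Rinv_0_lt_compat; lra|split].
  + apply Rinv_0_lt_compat, Rmult_lt_0_compat; [lra|unfold nr, Rpower; apply exp_pos].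
  + apply Rle_trans with (/ (INR D * INR n ^ t)); [|exact pow_ge].
    apply Rinv_le_contravar; [exact Dnt_gt0|apply Rmult_le_compat_l; lra].
- apply Rmult_le_compat_l; [lra|apply Rinv_le_contravar; lra].
Qed.
End DensityBound.

From mathcomp Require Import all_boot all_order all_algebra zify.
Set Implicit Arguments. Unset Strict Implicit. Unset Printing Implicit Defensive.
Import Order.TTheory GRing.Theory Num.Theory.
Local Open Scope ring_scope.

Lemma expn_Nat_pow (x k : nat) : (x ^ k)%N = Nat.pow x k.
Proof. by elim: k => [//|k IH]; rewrite expnS IH. Qed.

Lemma coprime_fact_succ K s c : (0 < c <= K)%N -> coprime c (K`! * s).+1.
Proof.
move=> c_range; apply: (@coprime_dvdl _ (K`! * s)); last exact: coprimenS.
by apply/dvdn_mulr/dvdn_fact.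
Qed.

Lemma exists_pow_between d X r : (0 < d)%N -> (0 < r)%N -> (0 < X)%N ->
  exists s, (X < (d * s).+1 ^ r <= d.+1 ^ r * X)%N.
Proof.
move=> d_gt0 r_gt0 X_gt0.
have above : exists s, (X < (d * s).+1 ^ r)%N.
  exists X; apply: leq_trans (leq_pexp2l _ r_gt0) => //.
  by rewrite -[X in (X < _)%N]mul1n ltnS leq_mul2r d_gt0 orbT.
have [s above_s min_s] := ex_minnP above.
exists s; rewrite above_s /=.
have s_gt0 : (0 < s)%N by case: s above_s {min_s} => //; rewrite muln0 exp1n; lia.
have below : ((d * s.-1).+1 ^ r <= X)%N by rewrite leqNgt; apply/negP => /min_s; lia.
(* [(d * s).+1 <= d.+1 * (d * s.-1).+1] *)
apply: leq_trans (leq_mul (leqnn _) below); rewrite -expnMn leq_exp2r //.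
by have := prednK s_gt0; nia.
Qed.

Lemma card_bigcup_le (I T : finType) (P : {pred I}) (F : I -> {set T}) :
  (#|\bigcup_(i in P) F i| <= \sum_(i in P) #|F i|)%N.
Proof.
apply: (big_ind2 (fun (A : {set T}) k => #|A| <= k)%N); first by rewrite cards0.
  by move=> A a B b hA hB; apply: leq_trans (leq_card_setU A B) (leq_add hA hB).
by [].
Qed.

Section CongruenceLattice.
Variables (n m : nat).
Local Notation M := m.+1.
Implicit Types (a : {ffun 'I_n -> 'I_M}) (x y z : 'rV[int]_n).

Definition dot a x : int := \sum_i x ord0 i * (a i)%:Z.

Lemma dotB a x y : dot a (x - y) = dot a x - dot a y.
Proof. by rewrite /dot -sumrB; apply: eq_bigr => i _; rewrite !mxE mulrBl. Qed.

Lemma dot_sub_agree a a' x i : (forall j, j != i -> a j = a' j) ->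
  dot a x - dot a' x = x ord0 i * ((a i)%:Z - (a' i)%:Z).
Proof.
move=> agree; rewrite /dot -sumrB (bigD1 i) //= big1 ?addr0 => [|j /agree ->].
  by rewrite mulrBr.
by rewrite subrr.
Qed.

Definition congr_lattice a x : Prop := (M %| dot a x)%Z.

Lemma congr_lattice_is_lattice a : is_lattice (congr_lattice a).
Proof.
split=> [|x y Lx Ly]; last by rewrite /congr_lattice dotB rpredB.
by rewrite /congr_lattice /dot big1 // => i _; rewrite mxE mul0r.
Qed.

Lemma has_index_gt0 (L : 'rV[int]_n -> Prop) v : has_index L v -> (0 < v)%N.
Proof. by case: v => // -[r [/(_ 0)[[]]]]. Qed.

Lemma has_index_fibres (G Y : finType) (e : G -> 'rV[int]_n) (h : 'rV[int]_n -> Y)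
    (L : 'rV[int]_n -> Prop) :
  (forall x y, L (x - y) <-> h x = h y) -> (forall z, exists g, h (e g) = h z) ->
  has_index L #|[set h (e g) | g : G]|.
Proof.
set S := [set _ | _ in _] => hL hsurj.
have rep (i : 'I_#|S|) : {g | h (e g) = enum_val i}.
  case: (pickP (fun g => h (e g) == enum_val i)) => [g /eqP|none]; first by exists g.
  by exfalso; have /imsetP[g _ /eqP] := enum_valP i; rewrite eq_sym none.
exists (fun i => e (sval (rep i))); split=> [z|i j].
  have [g hg] := hsurj z.
  have Sz : h z \in S by rewrite -hg imset_f.
  exists (enum_rank_in Sz (h z)); apply/hL.
  by rewrite (svalP (rep _)) enum_rankK_in.
by move/hL; rewrite !(svalP (rep _)); apply: enum_val_inj.
Qed.

Definition residue (u : int) : 'I_M := inord `|(u %% M)%Z|.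

Lemma residueE u : (residue u)%:Z = (u %% M)%Z.
Proof.
have u_ge0 : (0 <= u %% M)%Z by rewrite modz_ge0.
rewrite inordK; first by rewrite abszE ger0_norm.
by rewrite -ltz_nat abszE ger0_norm // ltz_pmod.
Qed.

Lemma residue_eq u v : (residue u = residue v) <-> (u = v %[mod M])%Z.
Proof.
rewrite -!residueE; split=> [-> //|]; move/eqP; rewrite eqz_nat => /eqP.
exact: val_inj.
Qed.

Lemma congr_lattice_index a :
  has_index (congr_lattice a)
    #|[set residue (dot a (\row_i (g i)%:Z)) | g : {ffun 'I_n -> 'I_M}]|.
Proof.
apply: (has_index_fibres (h := residue \o dot a)) => [x y|z] /=.
  by rewrite residue_eq /congr_lattice dotB -eqz_mod_dvd; split => /eqP.
exists [ffun i => residue (z ord0 i)]; apply/residue_eq/eqP.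
rewrite eqz_mod_dvd -dotB /dot; apply: rpred_sum => i _.
rewrite !mxE ffunE residueE; apply: dvdz_mulr.
rewrite {2}(divz_eq (z ord0 i) M) opprD addrC subrK.
by rewrite rpredN dvdz_mull.
Qed.

End CongruenceLattice.

Section Words.
Variables (n q : nat) (o : 'I_q).
Local Notation word := {ffun 'I_n -> 'I_q}.
Implicit Types (f g : word) (s : seq word).

Definition centred f : 'rV[int]_n := \row_i ((f i)%:Z - o%:Z).

Definition supp f : {set 'I_n} := [set i | f i != o].

Definition cover s : {set 'I_n} := \bigcup_(g <- s) supp g.

Lemma centred_eq0 f i : (centred f ord0 i == 0) = (i \notin supp f).
Proof. by rewrite mxE subr_eq0 eqz_nat inE negbK. Qed.

Lemma wt_centred f : wt (centred f) = #|supp f|.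
Proof. by apply: eq_card => i; rewrite [in LHS]inE centred_eq0 negbK. Qed.

Lemma cover_cons f s : cover (f :: s) = supp f :|: cover s.
Proof. by rewrite /cover big_cons. Qed.

Lemma notin_cover g s i : g \in s -> i \notin cover s -> i \notin supp g.
Proof.
by move=> gs; apply: contra => ig; rewrite /cover bigcup_seq; apply/bigcupP; exists g.
Qed.

Lemma card_cover_le t s :
  {in s, forall f, #|supp f| <= t}%N -> (#|cover s| <= t * size s)%N.
Proof.
elim: s => [|f s IH] small_s; first by rewrite /cover big_nil cards0.
rewrite cover_cons mulnS; apply: leq_trans (leq_card_setU _ _) _.
by rewrite leq_add ?small_s ?mem_head // IH // => g gs; rewrite small_s // mem_behead.
Qed.

Lemma card_supp_sub (U : {set 'I_n}) : (#|[set f | supp f \subset U]| <= q ^ #|U|)%N.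
Proof.
rewrite -[q in (q ^ _)%N]card_ord -(card_pffun_on o U predT).
apply/subset_leq_card/subsetP => f; rewrite inE => fU; apply/pffun_onP; split=> //.
by apply/subsetP => i; rewrite inE => fi; apply: (subsetP fU); rewrite inE.
Qed.

(* Chains are listed newest first: the last word is the base [f_0], on which
   no condition is imposed. *)
Fixpoint fresh_chain s : bool :=
  if s is f :: s' then
    (if s' is [::] then true else ~~ (supp f \subset cover s')) && fresh_chain s'
  else true.

Lemma fresh_chain_cons f s :
  s != [::] -> fresh_chain (f :: s) = ~~ (supp f \subset cover s) && fresh_chain s.
Proof. by case: s. Qed.

Lemma exists_fresh_chain t (F : {set word}) k :
  {in F, forall f, #|supp f| <= t}%N -> (q ^ (t * k) < #|F|)%N ->
  exists s, [/\ size s = k.+1, fresh_chain s & {subset s <= F}].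
Proof.
have q_gt0 : (0 < q)%N by apply: leq_ltn_trans (ltn_ord o).
move=> small_F; elim: k => [|k IH] big_F.
  have [f Ff] : exists f, f \in F by apply/card_gt0P; apply: leq_ltn_trans big_F.
  by exists [:: f]; split=> // g; rewrite inE => /eqP->.
have [s [size_s fresh_s sF]] :
    exists s, [/\ size s = k.+1, fresh_chain s & {subset s <= F}].
  by apply: IH; apply: leq_ltn_trans big_F; rewrite leq_pexp2l // leq_mul2l leqnSn orbT.
have [f Ff f_new] : exists2 f, f \in F & ~~ (supp f \subset cover s).
  apply/exists_inP; rewrite -negb_forall_in; apply: contraTN big_F => /forall_inP old.
  have small_s : {in s, forall f, #|supp f| <= t}%N by move=> g /sF; apply: small_F.
  have F_sub : F \subset [set f | supp f \subset cover s].
    by apply/subsetP => g Fg; rewrite inE; apply: old.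
  rewrite -leqNgt (leq_trans (subset_leq_card F_sub)) // (leq_trans (card_supp_sub _)) //.
  by rewrite leq_pexp2l // -size_s card_cover_le.
exists (f :: s); split; first by rewrite /= size_s.
  by rewrite fresh_chain_cons ?f_new // -size_eq0 size_s.
by move=> g; rewrite inE => /predU1P[->|/sF].
Qed.

Definition word_of (x : 'rV[int]_n) : word :=
  [ffun i => insubd o (absz (x ord0 i + o%:Z))].

Lemma centred_word_of (x : 'rV[int]_n) :
  (forall i, (- (o%:Z) <= x ord0 i < q%:Z - o%:Z)%R) -> centred (word_of x) = x.
Proof.
move=> x_box; apply/rowP => i; rewrite !mxE ffunE val_insubd.
have := x_box i; rewrite (_ : x 0 i = x ord0 i); last by congr (x _ _); apply: val_inj.
by case: ifP; lia.
Qed.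

Lemma card_small_supp_le t : (#|[set f | #|supp f| <= t]| <= (n.+1 * q) ^ t)%N.
Proof.
(* A word is rebuilt from a list of [t] optional positions with their letters. *)
pose build (g : {ffun 'I_t -> option 'I_n * 'I_q}) : word :=
  [ffun i => if [pick j | (g j).1 == Some i] is Some j then (g j).2 else o].
apply: (@leq_trans #|[set build g | g : {ffun 'I_t -> option 'I_n * 'I_q}]|); last first.
  apply: leq_trans (leq_imset_card _ _) _.
  by rewrite card_ffun card_prod card_option !card_ord.
apply/subset_leq_card/subsetP => f; rewrite inE => small_f.
pose e := map Some (enum (supp f)).
apply/imsetP; exists [ffun j : 'I_t => let oi := nth None e j in
                                      (oi, if oi is Some i then f i else o)] => //.
apply/ffunP => i; rewrite ffunE; case: pickP => [j|none].
  by rewrite !ffunE /=; case: (nth None e j) => // _ /eqP[->].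
have [i_f|] := boolP (i \in supp f); last by rewrite inE negbK => /eqP.
have i_e : (index i (enum (supp f)) < t)%N.
  by apply: leq_trans small_f; rewrite cardE index_mem mem_enum.
have := none (Ordinal i_e); rewrite ffunE /= (nth_map i) ?index_mem ?mem_enum //.
by rewrite nth_index ?mem_enum ?eqxx.
Qed.

Section Collapse.
Variable m : nat.
Local Notation M := m.+1.
Implicit Types a : {ffun 'I_n -> 'I_M}.

Definition collapses a s : bool :=
  all2rel (fun f g => dot a (centred f) == dot a (centred g) %[mod M])%Z s.

Definition set_coord a i c : {ffun 'I_n -> 'I_M} := [ffun j => if j == i then c else a j].

Lemma dot_set_coord a i c f :
  i \notin supp f -> dot (set_coord a i c) (centred f) = dot a (centred f).
Proof.
rewrite -centred_eq0 => /eqP fi0; apply: eq_bigr => j _; rewrite ffunE.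
by case: eqP => [->|//]; rewrite fi0 !mul0r.
Qed.

Lemma collapses_set_coord a i c s :
  i \notin cover s -> collapses (set_coord a i c) s = collapses a s.
Proof.
move=> i_out; apply: eq_in_allrel (allss s) (allss s) => f g fs gs.
by rewrite !dot_set_coord // (notin_cover _ i_out).
Qed.

Lemma collapses_cons a f s : collapses a (f :: s) -> collapses a s.
Proof.
by move/allrelP=> h; apply/allrelP=> g g' gs g's; apply: h; rewrite inE ?gs ?g's orbT.
Qed.

Hypothesis coprime_letters : forall c, (0 < c < q)%N -> coprime c M.

Lemma collapses_cons_inj a a' f s i :
  s != [::] -> i \in supp f -> i \notin cover s ->
  collapses a (f :: s) -> collapses a' (f :: s) -> (forall j, j != i -> a j = a' j) -> a = a'.
Proof.
case: s => [//|g s] _ i_f i_out col col' agree.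
have i_g : i \notin supp g by apply: notin_cover i_out; rewrite mem_head.
set x := centred f - centred g.
have x_i : x ord0 i = (f i)%:Z - o%:Z.
  have g_i : centred g ord0 i = 0 by apply/eqP; rewrite centred_eq0.
  by rewrite /x mxE [X in _ + X]mxE g_i oppr0 addr0 mxE.
have cong b : collapses b (f :: g :: s) -> (M %| dot b x)%Z.
  by move/allrelP=> h; rewrite dotB -eqz_mod_dvd h // ?mem_head // inE mem_head orbT.
have : (M %| x ord0 i * ((a i)%:Z - (a' i)%:Z))%Z.
  by rewrite -(dot_sub_agree x agree) rpredB ?cong.
rewrite Gauss_dvdzr; last first.
  rewrite x_i coprimezE coprime_sym; apply: coprime_letters.
  rewrite absz_gt0 subr_eq0 eqz_nat; apply/andP; split; first by move: i_f; rewrite inE.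
  by have := ltn_ord (f i); have := ltn_ord o; lia.
rewrite -eqz_mod_dvd !modz_nat eqz_nat !modn_small // => /eqP a_i.
by apply/ffunP => j; have [->|/agree] := eqVneq j i; first by apply: val_inj.
Qed.

Lemma card_collapses_cons f s : s != [::] -> ~~ (supp f \subset cover s) ->
  (#|[set a | collapses a (f :: s)]| * M <= #|[set a | collapses a s]|)%N.
Proof.
move=> s_nz /subsetPn[i i_f i_out].
rewrite -[M in (_ * M)%N]card_ord -cardsT -cardsX.
rewrite -(@card_in_imset _ _ (fun p => set_coord p.1 i p.2)); last first.
  move=> [a c] [a' c']; rewrite !inE /= !andbT => col col' eq_up.
  have eq_at j : set_coord a i c j = set_coord a' i c' j by rewrite eq_up.
  have := eq_at i; rewrite !ffunE eqxx => ->; congr (_, _).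
  apply: (collapses_cons_inj s_nz i_f i_out col col') => j ji.
  by have := eq_at j; rewrite !ffunE (negbTE ji).
apply/subset_leq_card/subsetP => ? /imsetP[[a c]]; rewrite !inE andbT => col ->.
by rewrite collapses_set_coord // (collapses_cons col).
Qed.

Lemma card_collapses s :
  fresh_chain s -> (#|[set a | collapses a s]| * M ^ (size s).-1 <= M ^ n)%N.
Proof.
have card_all s' : (#|[set a | collapses a s']| <= M ^ n)%N.
  by rewrite -[M in (M ^ _)%N]card_ord -[n in (_ ^ n)%N]card_ord -card_ffun max_card.
elim: s => [|f s IH]; first by rewrite muln1.
have [-> _|s_nz] := eqVneq s [::]; first by rewrite muln1.
rewrite fresh_chain_cons // => /andP[f_new fresh_s] /=.
rewrite -(prednK (_ : 0 < size s)%N) ?lt0n ?size_eq0 // expnS mulnA.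
by apply: leq_trans (IH fresh_s); rewrite leq_mul2r (card_collapses_cons s_nz f_new) orbT.
Qed.

Definition separates_chains a (B : {set word}) r : Prop :=
  forall s, size s = r.+1 -> {subset s <= B} -> fresh_chain s -> ~~ collapses a s.

Lemma exists_separating (B : {set word}) r :
  (#|B| ^ r.+1 < M ^ r)%N -> exists a, separates_chains a B r.
Proof.
move=> few_B.
pose chains := [set s : r.+1.-tuple word | all [in B] s && fresh_chain s].
pose bad := \bigcup_(s in chains) [set a | collapses a s].
have card_chains : (#|chains| <= #|B| ^ r.+1)%N.
  rewrite -[X in (_ ^ X)%N](card_ord r.+1) -card_ffun_on.
  rewrite -(@card_in_imset _ _ (fun s : r.+1.-tuple word => [ffun j => tnth s j])); last first.
    move=> s s' _ _ /ffunP eq_ss'; apply: eq_from_tnth => j.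
    by have := eq_ss' j; rewrite !ffunE.
  apply/subset_leq_card/subsetP => ? /imsetP[s]; rewrite inE => /andP[/allP sB _] ->.
  by apply/ffun_onP => j; rewrite ffunE sB ?mem_tnth.
have card_bad : (#|bad| * M ^ r < M ^ n * M ^ r)%N.
  apply: (@leq_ltn_trans (#|chains| * M ^ n)).
    apply: leq_trans (leq_mul (card_bigcup_le _ _) (leqnn _)) _.
    rewrite big_distrl /= -sum_nat_const; apply: leq_sum => s.
    rewrite inE => /andP[_ fresh_s].
    by have := card_collapses fresh_s; rewrite size_tuple.
  by rewrite mulnC ltn_pmul2l ?expn_gt0 // (leq_ltn_trans card_chains).
rewrite ltn_pmul2r ?expn_gt0 // in card_bad.
have /card_gt0P[a] : (0 < #|~: bad|)%N.
  by have := cardsC bad; rewrite card_ffun !card_ord; lia.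
rewrite inE => a_good.
exists a => s size_s sB fresh_s; apply: contra a_good => col.
apply/bigcupP; exists (Tuple (introT eqP size_s)); last by rewrite inE.
by rewrite inE fresh_s andbT; apply/allP.
Qed.

Lemma card_congruent_le t r a (B F : {set word}) :
  {in B, forall f, #|supp f| <= t}%N -> separates_chains a B r -> F \subset B ->
  {in F &, forall f g, dot a (centred f) == dot a (centred g) %[mod M]}%Z ->
  (#|F| <= q ^ (t * r))%N.
Proof.
move=> small_B sep FB congF; rewrite leqNgt; apply/negP => big_F.
have [|s [size_s fresh_s sF]] := exists_fresh_chain _ big_F.
  by move=> f /(subsetP FB)/small_B.
have /negP[] := sep s size_s (fun f fs => subsetP FB f (sF f fs)) fresh_s.
by apply/allrelP => f g /sF Ff /sF Fg; apply: congF.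
Qed.

Lemma congr_lattice_packs (P : pred 'rV[int]_n) t r a :
  (forall x, P x -> centred (word_of x) = x) ->
  {in [set f | P (centred f)], forall f, #|supp f| <= t}%N ->
  separates_chains a [set f | P (centred f)] r ->
  lambda_packs P (congr_lattice a) (q ^ (t * r)).
Proof.
move=> decode small sep z s uniq_s s_ok.
pose F := [set f | P (centred f) && (dot a (centred f) == dot a z %[mod M])%Z].
have FB : F \subset [set f | P (centred f)] by apply/subsetP => f; rewrite !inE => /andP[].
apply: leq_trans (card_congruent_le small sep FB _); last first.
  by move=> f g; rewrite !inE => /andP[_ /eqP->] /andP[_ /eqP->].
rewrite -(size_map (fun v => word_of (z - v))) cardE; apply: uniq_leq_size.
  rewrite map_inj_in_uniq // => v v' /s_ok[_ Pv] /s_ok[_ Pv'] /(congr1 centred).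
  by rewrite !decode // => /addrI/oppr_inj.
move=> _ /mapP[v /s_ok[Lv Pv] ->]; rewrite mem_enum inE decode // Pv /=.
by rewrite dotB eqz_mod_dvd addrAC subrr sub0r rpredN.
Qed.

End Collapse.
End Words.

Section BoxPacking.
Variables (n t kp km : nat).
Local Notation q := (kp + km + 1)%N.

Lemma box_origin_subproof : (km < q)%N.
Proof. by rewrite addn1 ltnS leq_addl. Qed.

Definition box_origin : 'I_q := Ordinal box_origin_subproof.
Local Notation o := box_origin.
Local Notation word := {ffun 'I_n -> 'I_q}.
Implicit Type f : word.

Lemma card_BE : card_B n t kp km = #|[set f : word | inB t kp km (centred o f)]|.
Proof. by []. Qed.

Lemma inB_supp f : inB t kp km (centred o f) -> (#|supp o f| <= t)%N.
Proof. by case/andP=> _; rewrite wt_centred. Qed.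

Lemma inB_centred_word_of (x : 'rV[int]_n) :
  inB t kp km x -> centred o (word_of o x) = x.
Proof.
case/andP=> /forallP x_box _; apply: centred_word_of => i.
by have := x_box i; rewrite /=; lia.
Qed.

Lemma card_B_gt0 : (0 < card_B n t kp km)%N.
Proof.
rewrite card_BE; apply/card_gt0P; exists [ffun _ => o]; rewrite inE; apply/andP; split.
  by apply/forallP => i; rewrite mxE ffunE subrr; lia.
rewrite wt_centred (_ : supp o _ = set0) ?cards0 //.
by apply/setP => i; rewrite !inE ffunE eqxx.
Qed.

Lemma card_B_le : (card_B n t kp km <= (n.+1 * q) ^ t)%N.
Proof.
rewrite card_BE (leq_trans _ (card_small_supp_le n o t)) //.
by apply/subset_leq_card/subsetP => f; rewrite !inE => /inB_supp.
Qed.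

Lemma box_lattice_packing r m :
  (forall c, 0 < c <= kp + km -> coprime c m.+1)%N ->
  (card_B n t kp km ^ r.+1 < m.+1 ^ r)%N ->
  exists (L : 'rV[int]_n -> Prop) (v : nat),
    [/\ is_lattice L, has_index L v, lambda_packs (inB t kp km) L (q ^ (t * r))
      & v <= m.+1]%N.
Proof.
move=> coprime_small; rewrite card_BE => few_B.
have coprime_letters c : (0 < c < q)%N -> coprime c m.+1.
  by rewrite addn1 ltnS; apply: coprime_small.
have [a sep] := exists_separating o coprime_letters few_B.
exists (congr_lattice a); eexists.
split; [exact: congr_lattice_is_lattice | exact: congr_lattice_index | |].
- apply: congr_lattice_packs sep; first exact: inB_centred_word_of.
  by move=> f; rewrite inE => /inB_supp.
- by rewrite -[X in (_ <= X)%N](card_ord m.+1) max_card.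
Qed.

End BoxPacking.

Theorem corollary10 (kp km t : nat) :
  (km <= kp)%N -> (0 < kp + km)%N -> (0 < t)%N ->
  forall eps : R, Rlt R0 eps ->
  exists lam : nat, exists c : R, Rlt R0 c /\
    forall N : nat, exists n : nat, (N <= n)%N /\
      exists (L : 'rV[int]_n -> Prop) (v : nat),
        is_lattice L /\ has_index L v /\
        lambda_packs (inB t kp km) L lam /\
        Rle (Rmult c (Rpower (INR n) (Ropp eps)))
            (Rdiv (INR (card_B n t kp km)) (INR v)).
Proof.
move=> _ _ t_gt0 eps eps_gt0.
have [r [r_gt0 t_le]] := exists_nat_mul_ge t eps eps_gt0.
have /ssrnat.ltP r_pos := r_gt0.
pose D := ((kp + km)`!.+1 ^ r * (2 * (kp + km + 1)) ^ t)%N.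
exists ((kp + km + 1) ^ (t * r))%N, (Rpower (INR D) (- / INR r)); split; first exact: exp_pos.
move=> N; exists N.+1; split=> //.
set b := card_B N.+1 t kp km.
have b_gt0 : (0 < b)%N := card_B_gt0 _ _ _ _.
have bpow_gt0 : (0 < b ^ r.+1)%N by rewrite expn_gt0 b_gt0.
have [s /andP[few_b M_le]] := exists_pow_between (fact_gt0 (kp + km)) r_pos bpow_gt0.
have [L [v [L_lattice L_index L_packs v_le]]] :=
  box_lattice_packing (fun c => @coprime_fact_succ _ s c) few_b.
exists L, v; do 3 split=> //.
have v_gt0 := has_index_gt0 L_index.
have M_bound : (((kp + km)`! * s).+1 ^ r <= D * N.+1 ^ t * b ^ r)%N.
  apply: leq_trans M_le _; rewrite expnS /D -!mulnA leq_mul2l mulnA leq_mul2r -expnMn.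
  apply/orP; right; apply/orP; right; apply: leq_trans (card_B_le _ _ _ _) _.
  by rewrite leq_exp2r //; lia.
apply: (density_bound D N.+1 b ((kp + km)`! * s).+1 v r t eps) => //.
- by apply/ssrnat.ltP; rewrite /D muln_gt0 !expn_gt0 addn1.
- exact/ssrnat.ltP.
- exact/ssrnat.ltP.
- exact/ssrnat.ltP.
- exact/ssrnat.leP.
- by apply/ssrnat.leP; rewrite -!expn_Nat_pow -!mulnE.
Qed.
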